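(* Let $n\ge 4$, $Q=\{0,\dots,n-1\}$, and let $X_n$ be a transition semigroup of maximum cardinality among transition semigroups of minimal complete DFAs with state set $Q$, initial state $0$ and empty state $n-1$ accepting suffix-free languages. If $X_n\neq\mathbf{V}_{\mathrm{sf}}(n)$ and $X_n\neq\mathbf{W}_{\mathrm{sf}}(n)$, then $X_n$ contains no pair of conflicting transformations.
   Context: A language $L$ is suffix-free if whenever $w\in L$ and $u\in L$ with $u$ a suffix of $w$, then $u=w$. Transformations act on the right ($qt$ is the image of $q$ under $t$). The transition semigroup of a DFA is the semigroup of transformations of its state set generated by the transformations induced by its letters. For a semigroup $T$ of transformations of $Q$: an unordered pair $\{p,q\}$ of distinct states of $Q\setminus\{0,n-1\}$ is colliding in $T$ if there exist $t\in T$ and $r\in Q\setminus\{0,n-1\}$ with $0t=p$ and $rt=q$; the pair is focused by a transformation $u$ if $pu=qu=r$ for some $r\notin\{0,n-1\}$. Define $\mathbf{B}_{\mathrm{sf}}(n)=\{t:Q\to Q \mid 0\notin Qt,\ (n-1)t=n-1,\ \text{and for all } j\ge1:\ 0t^j=n-1 \text{ or } 0t^j\neq qt^j \text{ for all } 0<q<n-1\}$, $\mathbf{V}_{\mathrm{sf}}(n)=\{t\in\mathbf{B}_{\mathrm{sf}}(n)\mid \text{for all } p\neq q \text{ in } Q:\ pt=qt=n-1 \text{ or } pt\neq qt\}$, and $\mathbf{W}_{\mathrm{sf}}(n)=\{t\in\mathbf{B}_{\mathrm{sf}}(n)\mid 0t=n-1 \text{ or } qt=n-1 \text{ for all } 1\le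 q\le n-2\}$. Two transformations $t,t'\in\mathbf{B}_{\mathrm{sf}}(n)$ conflict if, whenever $t$ and $t'$ both belong to the transition semigroup of a DFA $\mathcal{D}$ (state set $Q$, initial state $0$), at least one of the following holds: (1) the language accepted by $\mathcal{D}$ is not suffix-free; (2) every two states from $\{1,\dots,n-2\}$ are colliding in that semigroup; (3) every two states from $\{1,\dots,n-2\}$ are focused by some transformation of that semigroup. *)

From mathcomp Require Import all_boot.
From mathcomp Require Import boolp.

Set Implicit Arguments.
Unset Strict Implicit.
Unset Printing Implicit Defensive.

(* States Q = {0,...,n-1} are 'I_n; the initial state is the state of value 0
   and the empty state is the state of value n-1. Transformations of Q are
   {ffun 'I_n -> 'I_n}, acting on the right: (q t) is written [t q]. *)

Definition is_init {n} (q : 'I_n) : bool := val q == 0.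
Definition is_last {n} (q : 'I_n) : bool := val q == n.-1.
Definition inner {n} (q : 'I_n) : bool := (0 < val q) && (val q < n.-1).

Record dfa (n : nat) := DFA {
  nletters : nat;
  delta : 'I_nletters -> {ffun 'I_n -> 'I_n};
  final : {set 'I_n} }.

Definition run {n} (D : dfa n) (w : seq 'I_(nletters D)) (q : 'I_n) : 'I_n :=
  foldl (fun p a => @delta n D a p) q w.
Arguments run {n} D w q.

Definition word_trans {n} (D : dfa n) (w : seq 'I_(nletters D))
  : {ffun 'I_n -> 'I_n} := [ffun q => run D w q].

Arguments word_trans {n} D w.

Definition accepts {n} (D : dfa n) (w : seq 'I_(nletters D)) : bool :=
  [exists p, is_init p && (run D w p \in final D)].

Arguments accepts {n} D w.

Definition suffix_free {n} (D : dfa n) : Prop :=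
  forall w u, accepts D w -> accepts D u -> suffix u w -> u = w.

Definition tsg {n} (D : dfa n) : {set {ffun 'I_n -> 'I_n}} :=
  [set t | `[< exists w, w != [::] /\ word_trans D w = t >]].

Definition minimal_dfa {n} (D : dfa n) : Prop :=
  (forall p q : 'I_n, is_init p -> exists w, run D w p = q) /\
  (forall p q : 'I_n, p != q ->
     exists w, (run D w p \in final D) != (run D w q \in final D)).

Definition last_is_empty {n} (D : dfa n) : Prop :=
  forall q : 'I_n, is_last q -> forall w, run D w q \notin final D.

Definition sf_class {n} (D : dfa n) : Prop :=
  minimal_dfa D /\ last_is_empty D /\ suffix_free D.

Definition inB {n} (t : {ffun 'I_n -> 'I_n}) : Prop :=
  (forall q, ~~ is_init (t q)) /\
  (forall q, is_last q -> t q = q) /\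
  (forall j, 1 <= j -> forall p q : 'I_n, is_init p -> inner q ->
     is_last (iter j t p) \/ iter j t p <> iter j t q).

Definition inV {n} (t : {ffun 'I_n -> 'I_n}) : Prop :=
  inB t /\ forall p q : 'I_n, p != q ->
     (is_last (t p) /\ is_last (t q)) \/ t p <> t q.

Definition inW {n} (t : {ffun 'I_n -> 'I_n}) : Prop :=
  inB t /\ ((forall p : 'I_n, is_init p -> is_last (t p)) \/
            (forall q : 'I_n, inner q -> is_last (t q))).

Definition Bsf n : {set {ffun 'I_n -> 'I_n}} := [set t | `[< inB t >]].
Definition Vsf n : {set {ffun 'I_n -> 'I_n}} := [set t | `[< inV t >]].
Definition Wsf n : {set {ffun 'I_n -> 'I_n}} := [set t | `[< inW t >]].

Definition colliding {n} (T : {set {ffun 'I_n -> 'I_n}}) (p q : 'I_n) : Prop :=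
  exists2 t, t \in T & exists r, inner r /\ exists p0, is_init p0 /\
    ((t p0 = p /\ t r = q) \/ (t p0 = q /\ t r = p)).

Definition focused {n} (u : {ffun 'I_n -> 'I_n}) (p q : 'I_n) : Prop :=
  exists r, inner r /\ u p = r /\ u q = r.

Definition all_colliding {n} (T : {set {ffun 'I_n -> 'I_n}}) : Prop :=
  forall p q : 'I_n, inner p -> inner q -> p != q -> colliding T p q.

Definition all_focused {n} (T : {set {ffun 'I_n -> 'I_n}}) : Prop :=
  forall p q : 'I_n, inner p -> inner q -> p != q ->
    exists2 u, u \in T & focused u p q.

Definition conflict {n} (t t' : {ffun 'I_n -> 'I_n}) : Prop :=
  inB t /\ inB t' /\
  forall D : dfa n, t \in tsg D -> t' \in tsg D ->
    ~ suffix_free D \/ all_colliding (tsg D) \/ all_focused (tsg D).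

From mathcomp Require Import all_boot.
From mathcomp Require Import boolp.

Set Implicit Arguments.
Unset Strict Implicit.
Unset Printing Implicit Defensive.

(* If x is nonempty and the words x u and u lead from 0 to the same
   non-empty state, then for a word v accepted from that state both x u v
   and its proper suffix u v are accepted.  So no transformation of the
   semigroup sends 0 and an inner state to the same non-empty state.  If all pairs of inner states collide, a merge
   t p = t q outside n-1 composed after the colliding transformation would
   do exactly that, so the semigroup lies in V_sf(n); if all pairs are
   focused, the focusing transformation composed after t forbids t 0 and t q
   (q inner) from being both non-empty, so the semigroup lies in W_sf(n).
   Both V_sf(n) and W_sf(n) are transition semigroups of minimal suffix-free
   DFAs (one letter per transformation, final state 1), so a semigroup of
   maximum size contained in one of them equals it. *)

Section Runs.
Variables (n : nat) (D : dfa n).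

Lemma run_cat x y q : run D (x ++ y) q = run D y (run D x q).
Proof. by rewrite /run foldl_cat. Qed.

Lemma word_transE w q : word_trans D w q = run D w q.
Proof. by rewrite ffunE. Qed.

Lemma iter_word_trans w j q :
  iter j (word_trans D w) q = run D (flatten (nseq j w)) q.
Proof. by elim: j q => [|j IH] q //; rewrite iterSr IH /= run_cat word_transE. Qed.

Lemma tsgP t : reflect (exists2 w, w != [::] & word_trans D w = t) (t \in tsg D).
Proof. by rewrite inE; apply: (iffP (asboolP _)) => [[w []]|[w]]; exists w. Qed.

Lemma tsg_comp t u : t \in tsg D -> u \in tsg D -> [ffun q => u (t q)] \in tsg D.
Proof.
move=> /tsgP[w w0 <-] /tsgP[v _ <-]; apply/tsgP; exists (w ++ v).
  by case: w w0.
by apply/ffunP => q; rewrite !ffunE run_cat.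
Qed.

Lemma run_last_inB w q :
  (forall a, inB (@delta _ D a)) -> is_last q -> run D w q = q.
Proof.
move=> letB; elim: w q => [|a w IH] q ql //=.
by case: (letB a) => _ [fix_last _]; rewrite fix_last // IH.
Qed.

Lemma run_not_init_inB w q :
  (forall a, inB (@delta _ D a)) -> ~~ is_init q -> ~~ is_init (run D w q).
Proof. by move=> letB; elim: w q => [|a w IH] q qi //=; apply: IH; case: (letB a). Qed.

Lemma run_inj_inV u p q : (forall a, inV (@delta _ D a)) ->
  run D u p = run D u q -> ~~ is_last (run D u p) -> p = q.
Proof.
move=> letV; elim: u p q => [|a u IH] p q //= e nl.
have step_eq := IH _ _ e nl; case: (eqVneq p q) => // pq.
case: (letV a) => [letB /(_ p q pq) [[pl _]|//]].
by move: nl; rewrite (run_last_inB _ (fun b => proj1 (letV b)) pl) pl.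
Qed.

End Runs.

Section States.
Variable n : nat.
Implicit Types p q : 'I_n.+1.

Lemma eq_ord0 p : (p == ord0) = is_init p.
Proof. by rewrite -val_eqE. Qed.

Lemma eq_ord_max p : (p == ord_max) = is_last p.
Proof. by rewrite -val_eqE. Qed.

Lemma last_or_neq_ord_max p : is_last p \/ p <> ord_max.
Proof. by rewrite -eq_ord_max; case: eqP; [left | right]. Qed.

Lemma is_init_ord0 : is_init (@ord0 n). Proof. by []. Qed.

Lemma is_last_ord_max : is_last (@ord_max n).
Proof. by rewrite -eq_ord_max. Qed.

Lemma inner_not_init p : inner p -> ~~ is_init p.
Proof. by case/andP; rewrite /is_init lt0n. Qed.

Lemma inner_not_last p : inner p -> ~~ is_last p.
Proof. by case/andP=> _; rewrite /is_last ltn_neqAle => /andP[]. Qed.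

Lemma innerP p : ~~ is_init p -> ~~ is_last p -> inner p.
Proof.
rewrite /inner /is_init /is_last lt0n => -> /=.
by rewrite ltn_neqAle -ltnS ltn_ord andbT.
Qed.

Lemma inB_merge0 (t : {ffun 'I_n.+1 -> 'I_n.+1}) r :
  inB t -> inner r -> t ord0 = t r -> is_last (t ord0).
Proof. by case=> _ [_ tB] ri e; case: (tB 1 isT ord0 r isT ri). Qed.

End States.

Lemma run_merge_inW n (D : dfa n.+2) u p : (forall a, inW (@delta _ D a)) ->
  ~~ is_init p -> run D u p = run D u ord0 -> is_last (run D u p).
Proof.
move=> letW pni; have letB a := proj1 (letW a).
case: u => [/= p0|c u /=]; first by move: pni; rewrite p0 is_init_ord0.
suff [cpl|c0l] : is_last (delta c p) \/ is_last (delta c ord0).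
- by rewrite (run_last_inB _ letB cpl).
- by move=> ->; rewrite (run_last_inB _ letB c0l).
have [_ [c0l|c_inner]] := letW c; first by right; apply: c0l.
left; have [pl|pnl] := boolP (is_last p); last exact/c_inner/innerP.
by have [_ [fix_last _]] := letB c; rewrite fix_last.
Qed.

Section SuffixFree.
Variables (n : nat) (D : dfa n.+2).
Hypothesis sfD : sf_class D.

Lemma sf_reach q : exists w, run D w ord0 = q.
Proof. by case: sfD => [[reach _] _]; apply: reach. Qed.

Lemma sf_prefix_nil x u :
  run D (x ++ u) ord0 = run D u ord0 -> ~~ is_last (run D u ord0) -> x = [::].
Proof.
case: sfD => [[_ dist] [empty sf]]; set r := run D u ord0 => xu_u r_nl.
have [v] := dist r ord_max (r_nl : r != ord_max).
rewrite (negbTE (empty _ (is_last_ord_max _) v)) eqbF_neg negbK => rv.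
have acc_xuv : accepts D (x ++ (u ++ v)).
  by apply/existsP; exists ord0; rewrite is_init_ord0 catA run_cat xu_u.
have acc_uv : accepts D (u ++ v).
  by apply/existsP; exists ord0; rewrite is_init_ord0 run_cat.
move/(congr1 size): (sf _ _ acc_xuv acc_uv (suffix_suffix _ _)).
by rewrite !size_cat -{1}[size u + size v]add0n => /addIn /esym /size0nil.
Qed.

Lemma tsg_inB t : t \in tsg D -> inB t.
Proof.
case/tsgP=> w w0 <-; split; [|split].
- move=> q; rewrite word_transE -eq_ord0; apply/eqP.
  have [x <-] := sf_reach q; rewrite -run_cat => x_w0.
  have := @sf_prefix_nil (x ++ w) [::]; rewrite cats0 x_w0 => /(_ erefl isT).
  by case: x {x_w0} => [/= w_nil|//]; rewrite w_nil in w0.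
- move=> q ql; apply/eqP; apply/negPn/negP => moved.
  case: sfD => [[_ dist] [empty _]].
  have [v] := dist _ _ moved.
  by rewrite word_transE -run_cat !(negbTE (empty _ ql _)).
- move=> j _ p q; rewrite -eq_ord0 => /eqP -> qi.
  have [lj|nlj] := boolP (is_last _); [by left | right].
  have [x xq] := sf_reach q.
  rewrite !iter_word_trans -xq -run_cat in nlj * => e.
  have x0 := sf_prefix_nil (esym e) nlj.
  by move: qi; rewrite -xq x0 /= => /inner_not_init; rewrite is_init_ord0.
Qed.

Lemma tsg_merge0 t r : t \in tsg D -> inner r -> t ord0 = t r -> is_last (t ord0).
Proof. by move/tsg_inB; apply: inB_merge0. Qed.

Lemma all_colliding_sub_Vsf : all_colliding (tsg D) -> tsg D \subset Vsf n.+2.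
Proof.
move=> coll; apply/subsetP => t tD; rewrite inE; apply/asboolP.
have [_ [t_last _]] := tsg_inB tD.
split; first exact: tsg_inB.
move=> p q pq; case: (eqVneq (t p) (t q)) => [e|]; last by right; apply/eqP.
left; rewrite -e; suff : is_last (t p) by [].
have [pl|pnl] := boolP (is_last p); first by rewrite t_last.
have [ql|qnl] := boolP (is_last q); first by rewrite e t_last.
wlog qni : p q pq e pnl qnl / ~~ is_init q.
  move=> wlog_q; have [qi|] := boolP (is_init q); last exact: wlog_q.
  rewrite e; apply: (wlog_q q p) => //; first by rewrite eq_sym.
  by move: qi pq; rewrite -!eq_ord0 => /eqP ->.
have qi := innerP qni qnl.
have [pi|pni] := boolP (is_init p).
  by move: e; rewrite -eq_ord0 in pi; rewrite (eqP pi); apply: tsg_merge0.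
have [u uD [r [ri [p0 [p0i coll_pq]]]]] := coll p q (innerP pni pnl) qi pq.
have merge := tsg_merge0 (tsg_comp uD tD) ri; rewrite !ffunE in merge.
rewrite -eq_ord0 in p0i; rewrite (eqP p0i) in coll_pq.
by case: coll_pq => [[u0 ur]|[u0 ur]]; rewrite u0 ur in merge;
  [apply: merge | rewrite e; apply: merge].
Qed.

Lemma all_focused_sub_Wsf : all_focused (tsg D) -> tsg D \subset Wsf n.+2.
Proof.
move=> foc; apply/subsetP => t tD; rewrite inE; apply/asboolP.
have [t_ninit _] := tsg_inB tD.
split; first exact: tsg_inB.
have [t0l|t0nl] := boolP (is_last (t ord0)).
  by left=> p; rewrite -eq_ord0 => /eqP ->.
right=> q qi; apply/negPn/negP => tqnl.
have t0q : t ord0 != t q by apply: contraNneq t0nl; apply: tsg_merge0.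
have [u uD [r [ri [u0 uq]]]] :=
  foc _ _ (innerP (t_ninit _) t0nl) (innerP (t_ninit _) tqnl) t0q.
have := tsg_merge0 (tsg_comp tD uD) qi; rewrite !ffunE u0 uq.
by move=> /(_ erefl); apply/negP/inner_not_last.
Qed.

End SuffixFree.

Section SingleMap.
Variables (n : nat) (p a : 'I_n.+2).
Hypotheses (p_nl : ~~ is_last p) (a_ni : ~~ is_init a).

Definition single_map : {ffun 'I_n.+2 -> 'I_n.+2} :=
  [ffun x => if x == p then a else ord_max].

Lemma single_map_ord_max : single_map ord_max = ord_max.
Proof. by rewrite ffunE eq_sym eq_ord_max (negbTE p_nl). Qed.

Lemma single_map_inB : inB single_map.
Proof.
have iter_max k : iter k single_map ord_max = ord_max.
  by elim: k => //= k ->; apply: single_map_ord_max.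
split; [|split].
- by move=> q; rewrite ffunE; case: ifP.
- by move=> q; rewrite -eq_ord_max => /eqP ->; apply: single_map_ord_max.
- move=> [//|[|j] _] i q; rewrite -eq_ord0 => /eqP -> qi.
  + rewrite /= !ffunE; have [p0|_] := eqVneq ord0 p; last by left; apply: is_last_ord_max.
    have -> : (q == p) = false by rewrite -p0 eq_ord0; apply/negbTE/inner_not_init.
    by case: (last_or_neq_ord_max a); [left | right].
  + left; rewrite !iterSr.
    suff -> : single_map (single_map ord0) = ord_max by rewrite iter_max is_last_ord_max.
    rewrite [single_map ord0]ffunE; case: eqP => [p0|_]; last exact: single_map_ord_max.
    by rewrite ffunE -p0 eq_ord0 (negbTE a_ni).
Qed.

Lemma single_map_inV : single_map \in Vsf n.+2.
Proof.
rewrite inE; apply/asboolP; split; first exact: single_map_inB.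
have a_max := last_or_neq_ord_max a.
move=> x y xy; rewrite !ffunE.
case: (eqVneq x p) => [xp|_]; case: (eqVneq y p) => [yp|_].
- by rewrite xp yp eqxx in xy.
- by case: a_max => [al|]; [left; rewrite is_last_ord_max | right].
- by case: a_max => [al|an]; [left; rewrite is_last_ord_max | right=> e; apply: an].
- by left; rewrite is_last_ord_max.
Qed.

Lemma single_map_inW : single_map \in Wsf n.+2.
Proof.
rewrite inE; apply/asboolP; split; first exact: single_map_inB.
have [p0|p_n0] := eqVneq p ord0.
- right=> q qi; rewrite ffunE p0 eq_ord0 (negbTE (inner_not_init qi)).
  exact: is_last_ord_max.
- left=> q; rewrite -eq_ord0 => /eqP ->; rewrite ffunE eq_sym (negbTE p_n0).
  exact: is_last_ord_max.
Qed.

End SingleMap.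

Section LetterDFA.
Variables (n : nat) (S : {set {ffun 'I_n.+3 -> 'I_n.+3}}).

Definition state1 : 'I_n.+3 := Ordinal (isT : 1 < n.+3).

Definition letter_dfa : dfa n.+3 := @DFA n.+3 #|S| (fun i => enum_val i) [set state1].

Lemma letter_dfaP t : t \in S -> exists a : 'I_#|S|, enum_val a = t.
Proof. by move=> tS; exists (enum_rank_in tS t); exact: enum_rankK_in. Qed.

Lemma letter_dfa_sub : S \subset tsg letter_dfa.
Proof.
apply/subsetP => t /letter_dfaP[a <-]; apply/tsgP; exists [:: a] => //.
by apply/ffunP => q; rewrite ffunE.
Qed.

Hypothesis S_inB : forall t, t \in S -> inB t.
Hypothesis S_single : forall p a, ~~ is_last p -> ~~ is_init a -> single_map p a \in S.
Hypothesis S_merge : forall u p, ~~ is_init p ->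
  run letter_dfa u p = run letter_dfa u ord0 -> is_last (run letter_dfa u p).

Lemma letter_dfa_sf : sf_class letter_dfa.
Proof.
have letB a : inB (@delta _ letter_dfa a) by apply/S_inB/enum_valP.
have nonfinal_last q : is_last q -> q \notin final letter_dfa.
  by rewrite inE -eq_ord_max => /eqP ->.
have separate p q : p != q -> ~~ is_last p -> exists w,
    (run letter_dfa w p \in final letter_dfa)
      != (run letter_dfa w q \in final letter_dfa).
  move=> pq pnl; have [a a_def] := letter_dfaP (S_single pnl (isT : ~~ is_init state1)).
  by exists [:: a]; rewrite /= a_def !ffunE eqxx [q == p]eq_sym (negbTE pq) !inE eqxx.
split; [split|split].
- move=> p q; rewrite -eq_ord0 => /eqP ->.
  have [q0|qn0] := eqVneq q ord0; first by exists [::]; rewrite q0.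
  have qni : ~~ is_init q by rewrite -eq_ord0.
  have [a a_def] := letter_dfaP (S_single (isT : ~~ is_last (@ord0 n.+2)) qni).
  by exists [:: a]; rewrite /= a_def ffunE eqxx.
- move=> p q pq; have [pl|] := boolP (is_last p); last exact: separate.
  have qnl : ~~ is_last q.
    by apply: contra pq; rewrite -!eq_ord_max in pl * => /eqP ->.
  rewrite eq_sym in pq; have [w] := separate q p pq qnl.
  by exists w; rewrite eq_sym.
- by move=> q ql w; rewrite (run_last_inB _ letB ql); apply: nonfinal_last.
- move=> w u /existsP[p /andP[+ wF]] /existsP[q /andP[+ uF]].
  rewrite -!eq_ord0 => /eqP p0 /eqP q0; case/suffixP=> [[|a x] w_def] //; exfalso.
  move: wF uF; rewrite p0 q0 w_def run_cat /= !inE => /eqP w1 /eqP u1.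
  have := S_merge (run_not_init_inB x letB (proj1 (letB a) ord0)) (etrans w1 (esym u1)).
  by rewrite w1.
Qed.

End LetterDFA.

Lemma Vsf_letter_dfa_sf n : sf_class (letter_dfa (Vsf n.+3)).
Proof.
apply: letter_dfa_sf => [t|p a|u p pni e].
- by rewrite inE => /asboolP[].
- exact: single_map_inV.
- have letV a : inV (@delta _ (letter_dfa (Vsf n.+3)) a).
    by have := enum_valP a; rewrite inE => /asboolP.
  apply: contraR pni => nl; rewrite -eq_ord0; exact/eqP/(run_inj_inV letV e nl).
Qed.

Lemma Wsf_letter_dfa_sf n : sf_class (letter_dfa (Wsf n.+3)).
Proof.
apply: letter_dfa_sf => [t|p a|u p].
- by rewrite inE => /asboolP[].
- exact: single_map_inW.
- apply: run_merge_inW => a.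
  by have := enum_valP a; rewrite inE => /asboolP.
Qed.

Lemma maximal_tsg_sub_eq n (X S : {set {ffun 'I_n -> 'I_n}}) (D : dfa n) :
  (forall D' : dfa n, sf_class D' -> #|tsg D'| <= #|X|) ->
  sf_class D -> S \subset tsg D -> X \subset S -> X = S.
Proof.
move=> maxX sfD S_D XS; apply/eqP; rewrite eqEcard XS /=.
exact: leq_trans (subset_leq_card S_D) (maxX _ sfD).
Qed.

Theorem lemma4 (n : nat) (X : {set {ffun 'I_n -> 'I_n}}) :
  4 <= n ->
  (exists D : dfa n, sf_class D /\ tsg D = X) ->
  (forall D : dfa n, sf_class D -> #|tsg D| <= #|X|) ->
  X != Vsf n -> X != Wsf n ->
  ~ (exists t t', [/\ t \in X, t' \in X & conflict t t']).
Proof.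
case: n X => [|[|[|[|m]]]] // X _ [D [sfD <-]] maxX XnV XnW.
move=> [t [t' [tD t'D [_ [_ conf]]]]].
case: (conf D tD t'D) => [|[coll|foc]]; first by case: sfD => _ [].
- by rewrite (maximal_tsg_sub_eq maxX (Vsf_letter_dfa_sf _) (letter_dfa_sub _)
    (all_colliding_sub_Vsf sfD coll)) eqxx in XnV.
- by rewrite (maximal_tsg_sub_eq maxX (Wsf_letter_dfa_sf _) (letter_dfa_sub _)
    (all_focused_sub_Wsf sfD foc)) eqxx in XnW.
Qed.
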